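(* Let $\text{rank}[\mathbf{A}_{12}] = q$. Then the system $$\dot{\hat{\mathbf{z}}}_2(t) = [\mathbf{A}_{22} - \mathbf{L}\mathbf{A}_{12}]\hat{\mathbf{z}}_2(t) + \mathbf{L}\mathbf{y}_1(t) + \mathbf{D}\mathbf{u}_1(t) + \mathbf{F}\boldsymbol{\omega}(t), \qquad \dot{\boldsymbol{\omega}}(t) = \mathbf{G}[\mathbf{y}_1(t) - \mathbf{A}_{12}\hat{\mathbf{z}}_2(t)]$$ is a reduced order proportional-integral observer for the system $\dot{\mathbf{x}}(t) = \mathbf{A}\mathbf{x}(t) + \mathbf{B}\mathbf{u}(t)$, $\mathbf{y}(t) = \mathbf{C}\mathbf{x}(t)$ only if the following conditions hold: (a) $\text{rank}[\mathbf{G}] = k$; (b) $q \geq k$.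
   Context: Consider the continuous-time LTI system $\dot{\mathbf{x}}(t) = \mathbf{A}\mathbf{x}(t) + \mathbf{B}\mathbf{u}(t)$, $\mathbf{y}(t) = \mathbf{C}\mathbf{x}(t)$ with real matrices $\mathbf{A}$ ($n\times n$), $\mathbf{B}$ ($n\times m$), $\mathbf{C}$ ($p\times n$), $\text{rank}[\mathbf{C}]=p$. Let $\mathbf{T}$ be a nonsingular real $n\times n$ matrix with $\mathbf{C}\mathbf{T}=[\mathbf{I}_p,\mathbf{0}]$, and write $\mathbf{T}^{-1}\mathbf{A}\mathbf{T} = \begin{bmatrix}\mathbf{A}_{11} & \mathbf{A}_{12}\\ \mathbf{A}_{21} & \mathbf{A}_{22}\end{bmatrix}$, $\mathbf{T}^{-1}\mathbf{B} = \begin{bmatrix}\mathbf{G}_1\\ \mathbf{G}_2\end{bmatrix}$, where $\mathbf{A}_{12}$ is $p\times(n-p)$ and $\mathbf{A}_{22}$ is $(n-p)\times(n-p)$; $\mathbf{z}=\mathbf{T}^{-1}\mathbf{x} = [\mathbf{z}_1;\mathbf{z}_2]$ with $\mathbf{z}_1=\mathbf{y}$ and $\mathbf{z}_2$ of size $(n-p)$. Define $\mathbf{u}_1(t)=[\mathbf{y}(t);\mathbf{u}(t)]$, $\mathbf{y}_1(t)=\dot{\mathbf{y}}(t)-\mathbf{A}_{11}\mathbf{y}(t)-\mathbf{G}_1\mathbf{u}(t)$, $\mathbf{D}=[\mathbf{A}_{21},\mathbf{G}_2]$, so that $\dot{\mathbf{z}}_2 = \mathbf{A}_{22}\mathbf{z}_2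 + \mathbf{D}\mathbf{u}_1$, $\mathbf{y}_1=\mathbf{A}_{12}\mathbf{z}_2$. In the observer, $\hat{\mathbf{z}}_2(t)$ has size $(n-p)$, $\boldsymbol{\omega}(t)$ has size $k$, and $\mathbf{L}$, $\mathbf{F}$, $\mathbf{G}$ are real matrices of size $(n-p)\times p$, $(n-p)\times k$, $k\times p$. The observer is called a reduced order proportional-integral observer if for arbitrary initial conditions and any input, $\hat{\mathbf{z}}_2(t)-\mathbf{z}_2(t)\to\mathbf{0}$ and $\boldsymbol{\omega}(t)\to\mathbf{0}$ as $t\to\infty$; equivalently, the matrix $\begin{bmatrix}\mathbf{A}_{22}-\mathbf{L}\mathbf{A}_{12} & \mathbf{F}\\ -\mathbf{G}\mathbf{A}_{12} & \mathbf{0}\end{bmatrix}$ is Hurwitz stable (all eigenvalues have negative real parts). *)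

(* Real matrices over an abstract real closed field R;
   eigenvalues are taken in the algebraic closure R[i]. *)
From HB Require Import structures.
From mathcomp Require Import all_boot all_order all_algebra.
From mathcomp Require Import complex.
Set Implicit Arguments. Unset Strict Implicit. Unset Printing Implicit Defensive.
Import Order.TTheory GRing.Theory Num.Theory.
Local Open Scope ring_scope.

Definition hurwitz (R : rcfType) (n : nat) (M : 'M[R]_n) : Prop :=
  forall z : R[i],
    eigenvalue (map_mx (fun x : R => (x%:C)%C) M) z -> complex.Re z < 0.

Definition pi_error_matrix (R : rcfType) (p r k : nat)
  (A12 : 'M[R]_(p, r)) (A22 : 'M[R]_r) (L : 'M[R]_(r, p))
  (F : 'M[R]_(r, k)) (G : 'M[R]_(k, p)) : 'M[R]_(r + k) :=
  block_mx (A22 - L *m A12) F (- (G *m A12)) 0.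

(* The observer is a reduced order PI observer (characterization given in the
   paper's definition: the error matrix is Hurwitz stable). *)
Definition is_reduced_PI_observer (R : rcfType) (p r k : nat)
  (A12 : 'M[R]_(p, r)) (A22 : 'M[R]_r) (L : 'M[R]_(r, p))
  (F : 'M[R]_(r, k)) (G : 'M[R]_(k, p)) : Prop :=
  hurwitz (pi_error_matrix A12 A22 L F G).

From HB Require Import structures.
From mathcomp Require Import all_boot all_order all_algebra.
From mathcomp Require Import complex.
Import Order.TTheory GRing.Theory Num.Theory.
Local Open Scope ring_scope.

(* A Hurwitz error matrix is nonsingular, and the lower-left block of a
   nonsingular block matrix [X Y; Z 0] has independent rows; for the PI error
   matrix this forces G A12 to have full row rank k, which bounds both
   rank G and rank A12 from below by k. *)

Lemma eigenvalue0 (F : fieldType) n (M : 'M[F]_n) :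
  eigenvalue M 0 = (M \notin unitmx).
Proof. by rewrite /eigenvalue /eigenspace raddf0 subr0 kermx_eq0 row_free_unit. Qed.

Lemma hurwitz_unitmx (R : rcfType) n (M : 'M[R]_n) : hurwitz M -> M \in unitmx.
Proof.
move=> stableM; apply: contraT; rewrite -eigenvalue0.
rewrite -(eigenvalue_map (real_complex R)) rmorph0 => /stableM.
by rewrite ltxx.
Qed.

Lemma row_free_block_mx_dl (F : fieldType) m n (X : 'M[F]_m) (Y : 'M[F]_(m, n))
    (Z : 'M[F]_(n, m)) :
  block_mx X Y Z 0 \in unitmx -> row_free Z.
Proof.
rewrite -row_free_unit => /row_free_inj injM; apply: inj_row_free => w wZ0.
have : row_mx 0 w *m block_mx X Y Z 0 = 0 *m block_mx X Y Z 0.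
  by rewrite mul_row_block !mul0mx !add0r mulmx0 wZ0 row_mx0.
by move/injM/eqP; rewrite -row_mx0 => /eqP /eq_row_mx [].
Qed.

Lemma PI_observer_row_free (R : rcfType) p r k (A12 : 'M[R]_(p, r))
    (A22 : 'M[R]_r) (L : 'M[R]_(r, p)) (F : 'M[R]_(r, k)) (G : 'M[R]_(k, p)) :
  is_reduced_PI_observer A12 A22 L F G -> row_free (G *m A12).
Proof.
move=> /hurwitz_unitmx /row_free_block_mx_dl.
by rewrite /row_free mxrank_opp.
Qed.

Theorem theorem1 (R : rcfType) (p r m k q : nat)
  (A : 'M[R]_(p + r)) (B : 'M[R]_(p + r, m)) (C : 'M[R]_(p, p + r))
  (T : 'M[R]_(p + r))
  (hrankC : \rank C = p)
  (hT : T \in unitmx)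
  (hCT : C *m T = row_mx (1%:M : 'M[R]_p) (0 : 'M[R]_(p, r)))
  (L : 'M[R]_(r, p)) (F : 'M[R]_(r, k)) (G : 'M[R]_(k, p))
  (hq : \rank (ursubmx (invmx T *m A *m T)) = q) :
  is_reduced_PI_observer (ursubmx (invmx T *m A *m T))
    (drsubmx (invmx T *m A *m T)) L F G ->
  \rank G = k /\ (k <= q)%N.
Proof.
set A12 := ursubmx _ => /PI_observer_row_free /eqP rankGA12.
have k_le_rankGA12 : (k <= \rank (G *m A12))%N by rewrite rankGA12.
split; last by rewrite -hq (leq_trans k_le_rankGA12) ?mxrankM_maxr.
by apply/eqP; rewrite eqn_leq rank_leq_row (leq_trans k_le_rankGA12) ?mxrankM_maxl.
Qed.
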